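(* Let $\mu,\nu$ be compactly supported Borel probability measures on $\mathbb{R}^n$ and $(q,t)\in\mathbb{R}^2$ such that $B_{\mu,\nu}$ is differentiable at $(q,t)$; set $\alpha=-\frac{\partial B_{\mu,\nu}(q,t)}{\partial q}$ and $\beta=-\frac{\partial B_{\mu,\nu}(q,t)}{\partial t}$. Then for all $\eta_1,\eta_2>0$, $$\mathcal H^{\alpha q+\beta t+B_{\mu,\nu}(q,t)-\eta_1-\eta_2}\big(E_{\mu,\nu}(\alpha,\beta)\big)\ge 2^{\alpha q+\beta t-\eta_1-\eta_2}\,\mathcal H^{q,t,B_{\mu,\nu}(q,t)}_{\mu,\nu}\big(E_{\mu,\nu}(\alpha,\beta)\big).$$
   Context: $\mathcal H^s$ denotes the $s$-dimensional Hausdorff measure. $B(x,r)$ denotes the closed ball of center $x$ and radius $r$; conventions $0^q=\infty$ for $q\le0$, $0^q=0$ for $q>0$. Centered $\delta$-packings (resp. coverings) of $E$ are countable families of pairwise disjoint closed balls (resp. closed balls covering $E$) $B(x_i,r_i)$ with $x_i\in E$, $0<r_i\le\delta$. For $q,t,s\in\mathbb{R}$: $\overline{\mathcal P}^{q,t,s}_{\mu,\nu,\delta}(E)=\sup\sum_i\mu(B(x_i,r_i))^q\nu(B(x_i,r_i))^t(2r_i)^s$ over centered $\delta$-packings, $\overline{\mathcal P}^{q,t,s}_{\mu,\nu}=\inf_{\delta>0}\overline{\mathcal P}^{q,t,s}_{\mu,\nu,\delta}$, $\mathcal P^{q,t,s}_{\mu,\nu}(E)=\inf\{\sum_i\overline{\mathcal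 P}^{q,t,s}_{\mu,\nu}(E_i):E\subseteq\bigcup_iE_i\}$; $\overline{\mathcal H}^{q,t,s}_{\mu,\nu,\delta}(E)$ is the same sum with infimum over centered $\delta$-coverings, $\overline{\mathcal H}^{q,t,s}_{\mu,\nu}=\sup_{\delta>0}\overline{\mathcal H}^{q,t,s}_{\mu,\nu,\delta}$, $\mathcal H^{q,t,s}_{\mu,\nu}(E)=\sup_{F\subseteq E}\overline{\mathcal H}^{q,t,s}_{\mu,\nu}(F)$. $B^{q,t}_{\mu,\nu}(E)$ is the unique value in $[-\infty,\infty]$ where $s\mapsto\mathcal P^{q,t,s}_{\mu,\nu}(E)$ jumps from $\infty$ (smaller $s$) to $0$ (larger $s$), and $B_{\mu,\nu}(q,t)=B^{q,t}_{\mu,\nu}(\operatorname{supp}\mu\cap\operatorname{supp}\nu)$. $E_{\mu,\nu}(\alpha,\beta)=\{x\in\operatorname{supp}\mu\cap\operatorname{supp}\nu:\lim_{r\to0}\frac{\log\mu(B(x,r))}{\log r}=\alpha,\ \lim_{r\to0}\frac{\log\nu(B(x,r))}{\log r}=\beta\}$. *)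

From HB Require Import structures.
From mathcomp Require Import all_boot all_order all_algebra.
From mathcomp Require Import all_classical all_reals all_analysis.
Set Implicit Arguments. Unset Strict Implicit. Unset Printing Implicit Defensive.
Import Order.TTheory GRing.Theory Num.Theory.
Import numFieldNormedType.Exports.
Local Open Scope classical_set_scope.
Local Open Scope ring_scope.

Section MixedMultifractal.
Variables (R : realType) (n : nat).
Local Notation V := 'rV[R]_n.

Definition edist (x y : V) : R := Num.sqrt (\sum_(i < n) (x ord0 i - y ord0 i) ^+ 2).

Definition cball (x : V) (r : R) : set V := [set y | edist x y <= r].

Definition BorelRn : Type := g_sigma_algebraType (@open V).

Definition supp (mu : set BorelRn -> \bar R) : set V :=
  [set x | forall r : R, 0 < r -> (0 < mu (cball x r))%E].

Definition epow (a q : R) : \bar R :=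
  if a == 0 then (if q <= 0 then +oo%E else 0%E) else (a `^ q)%:E.

Definition mterm (mu nu : set BorelRn -> \bar R) (q t s : R) (b : option (V * R))
  : \bar R :=
  match b with
  | None => 0%E
  | Some (x, r) => (epow (fine (mu (cball x r))) q * epow (fine (nu (cball x r))) t
                     * ((2 * r) `^ s)%:E)%E
  end.

(** Countable families of closed balls are encoded as sequences of optional
    (center, radius) pairs ([None] = no ball), allowing finite/empty families. *)
Definition centered_delta (E : set V) (delta : R) (c : nat -> option (V * R)) :=
  forall i x r, c i = Some (x, r) -> E x /\ 0 < r /\ r <= delta.

Definition is_delta_packing (E : set V) (delta : R) (c : nat -> option (V * R)) :=
  centered_delta E delta c /\
  forall i j x r y u, i <> j -> c i = Some (x, r) -> c j = Some (y, u) ->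
    cball x r `&` cball y u = set0.

Definition is_delta_covering (E : set V) (delta : R) (c : nat -> option (V * R)) :=
  centered_delta E delta c /\
  E `<=` \bigcup_i [set y | exists x r, c i = Some (x, r) /\ cball x r y].

Definition Pbar_delta mu nu q t s (E : set V) (delta : R) : \bar R :=
  ereal_sup [set (\sum_(i <oo) mterm mu nu q t s (c i))%E | c in is_delta_packing E delta].

Definition Pbar mu nu q t s (E : set V) : \bar R :=
  ereal_inf [set Pbar_delta mu nu q t s E delta | delta in [set d : R | 0 < d]].

Definition Pmeas mu nu q t s (E : set V) : \bar R :=
  ereal_inf [set (\sum_(i <oo) Pbar mu nu q t s (F i))%E |
              F in [set F : nat -> set V | E `<=` \bigcup_i F i]].

Definition Hbar_delta mu nu q t s (E : set V) (delta : R) : \bar R :=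
  ereal_inf [set (\sum_(i <oo) mterm mu nu q t s (c i))%E | c in is_delta_covering E delta].

Definition Hbar mu nu q t s (E : set V) : \bar R :=
  ereal_sup [set Hbar_delta mu nu q t s E delta | delta in [set d : R | 0 < d]].

Definition Hmeas mu nu q t s (E : set V) : \bar R :=
  ereal_sup [set Hbar mu nu q t s F | F in [set F | F `<=` E]].

Definition Bqt mu nu q t (E : set V) : \bar R :=
  ereal_inf [set s%:E | s in [set s : R | Pmeas mu nu q t s E = 0%E]].

Definition Bfun mu nu (q t : R) : \bar R := Bqt mu nu q t (supp mu `&` supp nu).

Definition ediam (U : set V) : \bar R :=
  ereal_sup ([set 0%E] `|` [set (edist x y)%:E | x in U & y in U]).

Definition hterm (s : R) (U : set V) : \bar R :=
  if `[< U = set0 >] then 0%E else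
  let d := fine (ediam U) in
  if d == 0 then (if s == 0 then 1%E else if 0 < s then 0%E else +oo%E)
  else (d `^ s)%:E.

Definition Hs_delta (s : R) (E : set V) (delta : R) : \bar R :=
  ereal_inf [set (\sum_(i <oo) hterm s (U i))%E |
    U in [set U : nat -> set V | E `<=` \bigcup_i U i /\
                                  forall i, (ediam (U i) <= delta%:E)%E]].

(** s-dimensional Hausdorff measure H^s (no normalising constant). *)
Definition Hausdorff (s : R) (E : set V) : \bar R :=
  ereal_sup [set Hs_delta s E delta | delta in [set d : R | 0 < d]].

Definition Elevel (mu nu : set BorelRn -> \bar R) (a b : R) : set V :=
  [set x | (supp mu `&` supp nu) x /\
     (fun r => ln (fine (mu (cball x r))) / ln r) @ 0^'+ --> a /\
     (fun r => ln (fine (nu (cball x r))) / ln r) @ 0^'+ --> b].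

End MixedMultifractal.

From Pilot Require Import Defs.
From HB Require Import structures.
From mathcomp Require Import all_boot all_order all_algebra.
From mathcomp Require Import all_classical all_reals all_analysis.
From mathcomp Require Import lra.
Import Order.TTheory GRing.Theory Num.Theory.
Import numFieldNormedType.Exports.
Local Open Scope classical_set_scope.
Local Open Scope ring_scope.

(* At a point x of E = E_{mu,nu}(alpha,beta) the local dimensions give
   mu(B(x,r))^q nu(B(x,r))^t (2r)^s <= 2^s r^p for all small r, whenever
   p < alpha q + beta t + s.  Take p strictly between that bound and
   s' = alpha q + beta t + s - eta1 - eta2.  Replacing each set U of a fine cover
   of E by a ball centred in E of radius diam U then costs at most
   2^s delta^(p - s') |U|^s', so H^{q,t,s}_{mu,nu}(E) = 0 as soon as H^s'(E) is
   finite, and otherwise the left-hand side is infinite.  The inequality thus holds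
   for every alpha and beta. *)

Section MixedHausdorffComparison.
Set Implicit Arguments.
Unset Strict Implicit.
Variables (R : realType) (n : nat).
Local Notation V := 'rV[R]_n.

Lemma continuous_edist (x : V) : continuous (Defs.edist x).
Proof.
have sum_cont : continuous (fun y : V => \sum_(i < n) (x ord0 i - y ord0 i) ^+ 2).
  apply: continuous_big => [|i _ y]; first exact: add_continuous.
  have lin : {for y, continuous (fun z : V => x ord0 i - z ord0 i)}.
    exact: cvgB (cvg_cst _) (@coord_continuous R 1 n ord0 i y).
  exact: (cvgM lin lin).
by move=> y; apply: continuous_comp; [exact: sum_cont | exact: sqrt_continuous].
Qed.

Lemma closed_cball (x : V) r : closed (cball x r).
Proof.
have -> : cball x r = Defs.edist x @^-1` [set z | z <= r] by [].
by apply: (proj1 (continuous_closedP _) (@continuous_edist x)); exact: closed_le.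
Qed.

Lemma measurable_cball (x : V) r : measurable (cball x r : set (BorelRn R n)).
Proof.
rewrite -[cball x r]setCK; apply: measurableC; apply: sub_sigma_algebra.
exact: closed_openC (@closed_cball x r).
Qed.

Lemma supp_cball_gt0 (mu : probability (BorelRn R n) R) (x : V) r :
  supp mu x -> 0 < r -> 0 < fine (mu (cball x r)).
Proof.
move=> mux r0; apply: fine_gt0; rewrite mux 1?r0 //=.
exact: le_lt_trans (probability_le1 mu (measurable_cball x r)) (ltry _).
Qed.

Lemma powR_mul_le_ln_ratio (A B r q t g : R) : 0 < A -> 0 < B -> 0 < r < 1 ->
  g < q * (ln A / ln r) + t * (ln B / ln r) -> A `^ q * B `^ t <= r `^ g.
Proof.
move=> A0 B0 /andP[r0 r1].
have lnr0 : ln r < 0 by apply: ln_lt0; rewrite r0 r1.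
rewrite !mulrA -mulrDl ltr_ndivlMr // => /ltW.
rewrite -ler_ln ?posrE ?mulr_gt0 ?powR_gt0 //.
by rewrite lnM ?posrE ?powR_gt0 // !ln_powR.
Qed.

Lemma Elevel_mterm_le (mu nu : probability (BorelRn R n) R) (q t s a b p : R) (x : V) :
  Elevel mu nu a b x -> p < a * q + b * t + s ->
  exists2 rho, 0 < rho & forall r, 0 < r -> r <= rho ->
    (mterm mu nu q t s (Some (x, r)) <= (2 `^ s * r `^ p)%:E)%E.
Proof.
move=> [[mux nux] [dim_mu dim_nu]]; rewrite -ltrBlDr; set g := p - s => ga.
set dA := fun r => ln (fine (mu (cball x r))) / ln r.
set dB := fun r => ln (fine (nu (cball x r))) / ln r.
have dim_qt : (fun r => q * dA r + t * dB r) @ 0^'+ --> a * q + b * t.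
  rewrite (mulrC a) (mulrC b).
  by apply: cvgD; [exact: (cvgM (cvg_cst q) dim_mu) | exact: (cvgM (cvg_cst t) dim_nu)].
have : \forall r \near 0^'+, g < q * dA r + t * dB r /\ r < 1.
  near=> r; split; last by near: r; exact: nbhs_right_lt.
  by near: r; exact: (cvgr_gt _ dim_qt _ ga).
rewrite near_withinE => /nbhs_ballP[e /= e0 small_r].
exists (e / 2); first by rewrite divr_gt0.
move=> r r0 re.
have [gr r1] : g < q * dA r + t * dB r /\ r < 1.
  apply: small_r => //; rewrite /ball /= sub0r normrN gtr0_norm //.
  by apply: le_lt_trans re _; rewrite ltr_pdivrMr // ltr_pMr // ltr1n.
rewrite /mterm /epow.
rewrite (gt_eqF (supp_cball_gt0 mux r0)) (gt_eqF (supp_cball_gt0 nux r0)).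
rewrite -!EFinM lee_fin powRM ?ler0n; last exact: ltW.
rewrite -[in leRHS](subrK s p) powRD; last by rewrite (gt_eqF r0) implybT.
rewrite mulrCA ler_pM2l ?powR_gt0 // ler_wpM2r ?powR_ge0 //.
by apply: powR_mul_le_ln_ratio; rewrite ?supp_cball_gt0 ?r0.
Unshelve. all: by end_near. Qed.

Lemma epow_ge0 (a q : R) : (0 <= epow a q)%E.
Proof. by rewrite /epow; case: ifP => _; [case: ifP | rewrite lee_fin powR_ge0]. Qed.

Lemma mterm_ge0 (mu nu : set (BorelRn R n) -> \bar R) q t s b :
  (0 <= mterm mu nu q t s b)%E.
Proof.
by case: b => [[x r]|] //=; rewrite !mule_ge0 ?epow_ge0 // lee_fin powR_ge0.
Qed.

Lemma ediam_ge0 (U : set V) : (0 <= ediam U)%E.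
Proof. by apply: ereal_sup_ubound; left. Qed.

Lemma edist_le_ediam (U : set V) x y : U x -> U y -> ((Defs.edist x y)%:E <= ediam U)%E.
Proof. by move=> Ux Uy; apply: ereal_sup_ubound; right; exists x => //; exists y. Qed.

Lemma hterm_ge0 s (U : set V) : (0 <= hterm s U)%E.
Proof.
rewrite /hterm; case: ifP => // _; case: ifP => _; last by rewrite lee_fin powR_ge0.
by case: ifP => // _; case: ifP.
Qed.

Lemma Hs_delta_ge0 s (E : set V) d : (0 <= Hs_delta s E d)%E.
Proof.
apply: le_ereal_inf_tmp => _ [U _ <-].
by apply: nneseries_ge0 => i _ _; exact: hterm_ge0.
Qed.

Lemma Hs_delta_le_Hausdorff s (E : set V) d : 0 < d -> (Hs_delta s E d <= Hausdorff s E)%E.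
Proof. by move=> d0; apply: ereal_sup_ubound; exists d. Qed.

Lemma Hausdorff_ge0 s (E : set V) : (0 <= Hausdorff s E)%E.
Proof. exact: le_trans (@Hs_delta_ge0 s E 1) (@Hs_delta_le_Hausdorff s E 1 ltr01). Qed.

Lemma powR_small_le (K p e r : R) : 0 < K -> 0 < p -> 0 < e -> 0 <= r ->
  r <= (e / K) `^ p^-1 -> K * r `^ p <= e.
Proof.
move=> K0 p0 e0 r0 r_small.
have eK0 : 0 <= e / K by rewrite ltW // divr_gt0.
have : r `^ p <= ((e / K) `^ p^-1) `^ p.
  by apply: ge0_ler_powR; rewrite ?nnegrE ?powR_ge0 ?(ltW p0).
rewrite -powRrM mulVf ?gt_eqF // powRr1 // -(ler_pM2l K0) => /le_trans; apply.
by rewrite mulrC divfK ?gt_eqF.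
Qed.

Lemma powR_le_mul_powR (d delta p s : R) : 0 < d -> d <= delta -> s <= p ->
  d `^ p <= delta `^ (p - s) * d `^ s.
Proof.
move=> d0 d_delta sp; rewrite -{1}(subrK s p) (@powRD _ d); last by rewrite (gt_eqF d0) implybT.
rewrite ler_wpM2r ?powR_ge0 //; apply: ge0_ler_powR; rewrite ?subr_ge0 ?nnegrE //.
- exact: ltW.
- exact: le_trans (ltW d0) d_delta.
Qed.

Lemma ball_covering_set (mu nu : set (BorelRn R n) -> \bar R) q t s (s' p K delta e : R)
    (G U : set V) :
  0 < K -> s' < p -> 0 < delta -> 0 < e ->
  (forall x r, G x -> 0 < r -> r <= delta ->
     (mterm mu nu q t s (Some (x, r)) <= (K * r `^ p)%:E)%E) ->
  (ediam U <= delta%:E)%E ->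
  exists b : option (V * R),
    [/\ forall x r, b = Some (x, r) -> G x /\ 0 < r /\ r <= delta,
        U `&` G `<=` [set y | exists x r, b = Some (x, r) /\ cball x r y] &
        (mterm mu nu q t s b <= (K * delta `^ (p - s'))%:E * hterm s' U + e%:E)%E].
Proof.
move=> K0 sp delta0 e0 bound diamU.
have main_ge0 : (0 <= (K * delta `^ (p - s'))%:E * hterm s' U)%E.
  by rewrite mule_ge0 ?hterm_ge0 // lee_fin mulr_ge0 ?powR_ge0 // ltW.
have [[x [Ux Gx]]|UG0] := pselect (exists x, U x /\ G x); last first.
  exists None; split => //; first by move=> y [Uy Gy]; exfalso; apply: UG0; exists y.
  by rewrite /= adde_ge0 // lee_fin ltW.
have [d diamE] : exists d, ediam U = d%:E.
  exists (fine (ediam U)); rewrite fineK // ge0_fin_numE ?ediam_ge0 //.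
  exact: le_lt_trans diamU (ltry _).
have d_ge0 : 0 <= d by rewrite -lee_fin -diamE ediam_ge0.
have d_delta : d <= delta by rewrite -lee_fin -diamE.
have U_ball r : d <= r -> U `<=` cball x r.
  by move=> dr y Uy; apply: le_trans dr; rewrite -lee_fin -diamE edist_le_ediam.
have hU : hterm s' U = if d == 0 then (if s' == 0 then 1%E else if 0 < s' then 0%E else +oo%E)
                       else (d `^ s')%:E.
  by rewrite /hterm asboolF ?diamE //; move=> U0; rewrite U0 in Ux.
have [d0|] := ltP 0 d.
  exists (Some (x, d)); split => //; first by move=> _ _ [<- <-].
    by move=> y [Uy _]; exists x, d; split => //; exact: U_ball.
  apply: le_trans (bound x d Gx d0 d_delta) _.
  rewrite hU gt_eqF // -EFinM -EFinD lee_fin -mulrA -[leLHS]addr0.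
  apply: lerD; last exact: ltW.
  by rewrite ler_pM2l //; apply: powR_le_mul_powR => //; exact: ltW.
(* A set of diameter 0 is a point: any radius works, and for s' < 0 its
   H^s' term is already infinite. *)
move=> d_le0; have d0 : d = 0 by apply/eqP; rewrite eq_le d_le0.
set r := Num.min delta ((e / K) `^ p^-1).
have r0 : 0 < r by rewrite lt_min delta0 powR_gt0 // divr_gt0.
have r_delta : r <= delta by rewrite ge_min lexx.
exists (Some (x, r)); split => //; first by move=> _ _ [<- <-].
  by move=> y [Uy _]; exists x, r; split => //; apply: U_ball (Uy); rewrite d0 ltW.
have [s'0|s'0] := ltP s' 0.
  rewrite hU d0 eqxx (lt_eqF s'0) ltNge (ltW s'0) /= mulry gtr0_sg ?mul1e.
    by rewrite addye ?leey.
  by rewrite mulr_gt0 // powR_gt0.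
apply: le_trans (bound x r Gx r0 r_delta) _.
apply: le_trans (leeDr _ main_ge0); rewrite lee_fin.
apply: powR_small_le => //.
- exact: le_lt_trans s'0 sp.
- exact: ltW.
- by rewrite ge_min lexx orbT.
Qed.

Lemma small_delta_covering (mu nu : set (BorelRn R n) -> \bar R) q t s (s' p K rho M : R)
    (E G : set V) :
  0 < K -> s' < p -> 0 < rho -> G `<=` E -> Hausdorff s' E = M%:E ->
  (forall x r, G x -> 0 < r -> r <= rho ->
     (mterm mu nu q t s (Some (x, r)) <= (K * r `^ p)%:E)%E) ->
  forall delta eps, 0 < delta -> 0 < eps ->
  exists2 c, is_delta_covering G delta c &
    (\sum_(i <oo) mterm mu nu q t s (c i) <= eps%:E)%E.
Proof.
move=> K0 sp rho0 GE HsE bound delta eps delta0 eps0.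
have M0 : 0 <= M by rewrite -lee_fin -HsE Hausdorff_ge0.
have M1 : 0 < M + 1 by rewrite ltr_wpDl.
set d := Num.min delta (Num.min rho ((eps / 2 / (M + 1) / K) `^ (p - s')^-1)).
have d0 : 0 < d by rewrite !lt_min delta0 rho0 powR_gt0 // !divr_gt0.
have d_delta : d <= delta by rewrite ge_min lexx.
have d_rho : d <= rho by rewrite !ge_min lexx orbT.
have d_small : K * d `^ (p - s') * (M + 1) <= eps / 2.
  rewrite -ler_pdivlMr //; apply: powR_small_le; rewrite ?subr_gt0 ?divr_gt0 //.
  - exact: ltW.
  - by rewrite !ge_min lexx !orbT.
have : (Hs_delta s' E d < (M + 1)%:E)%E.
  by apply: le_lt_trans (Hs_delta_le_Hausdorff s' E d0) _; rewrite HsE lte_fin ltrDl.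
case/ereal_inf_lt => _ [U [EU diamU] <-] sumU.
have eps_i_gt0 i : 0 < eps / 2 / (2 ^ i.+1)%:R by rewrite !divr_gt0 // ltr0n expn_gt0.
have bound_d x r : G x -> 0 < r -> r <= d ->
    (mterm mu nu q t s (Some (x, r)) <= (K * r `^ p)%:E)%E.
  by move=> Gx r0 rd; apply: bound => //; exact: le_trans rd d_rho.
have [c /all_and3[c_centered c_covers c_le]] := choice (fun i =>
  ball_covering_set K0 sp d0 (eps_i_gt0 i) bound_d (diamU i)).
exists c.
  split=> [i x r /c_centered[Gx [r0 rd]]|y Gy].
    by do 2!split=> //; exact: le_trans rd d_delta.
  have [i _ Uy] := EU y (GE y Gy).
  by exists i => //; exact: c_covers.
apply: le_trans (lee_nneseries (fun i _ _ => mterm_ge0 _ _ _ _ _ _) (fun i _ => c_le i)) _.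
apply: le_trans (epsilon_trick _ _ _) _.
- by move=> i; rewrite mule_ge0 ?hterm_ge0 // lee_fin mulr_ge0 ?powR_ge0 // ltW.
- by rewrite divr_ge0 // ltW.
rewrite nneseriesZl; last by move=> i _; exact: hterm_ge0.
rewrite [X in (_ <= X%:E)%E](splitr eps) EFinD leeD2r //.
apply: le_trans (lee_pmul _ _ (lexx _) (ltW sumU)) _.
- by rewrite lee_fin mulr_ge0 ?powR_ge0 // ltW.
- by apply: nneseries_ge0 => i _ _; exact: hterm_ge0.
by rewrite -EFinM lee_fin.
Qed.

Lemma nneseries_pair_reindex (h : nat -> nat -> \bar R) (f : nat -> nat * nat) :
  (forall i j, (0 <= h i j)%E) -> set_bij setT setT f ->
  (\sum_(m <oo) h (f m).1 (f m).2 = \sum_(i <oo) \sum_(j <oo) h i j)%E.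
Proof.
move=> h0 f_bij.
rewrite nneseries_esumT // -(@reindex_esum R _ _ setT setT f (fun z => h z.1 z.2) f_bij).
rewrite nneseries_esumT; last by move=> i; exact: nneseries_ge0.
rewrite (eq_esum (b := fun i => \esum_(j in setT) h i j)); last first.
  by move=> i _; rewrite nneseries_esumT.
by rewrite esum_esum //; congr esum; apply/seteqP; split.
Qed.

Lemma Hbar_delta_le_bigcup (mu nu : set (BorelRn R n) -> \bar R) q t s (F : set V)
    (G : nat -> set V) (c : nat -> nat -> option (V * R)) delta :
  F `<=` \bigcup_k G k -> (forall k, G k `<=` F) ->
  (forall k, is_delta_covering (G k) delta (c k)) ->
  (Hbar_delta mu nu q t s F delta <= \sum_(k <oo) \sum_(i <oo) mterm mu nu q t s (c k i))%E.
Proof.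
move=> F_G G_F c_cov.
have /card_esym/ppcard_eqP[f] := card_nat2.
have f_bij : set_bij setT setT f by exact: bij.
rewrite -(nneseries_pair_reindex (fun k i => mterm_ge0 mu nu q t s (c k i)) f_bij).
apply: ereal_inf_lbound; exists (fun m => c (f m).1 (f m).2) => //; split.
  move=> m x r cx; have [centered _] := c_cov (f m).1.
  by have [Gx r_spec] := centered _ _ _ cx; split => //; exact: G_F Gx.
move=> y Fy; have [k _ Gy] := F_G y Fy.
have [i _ yi] := (c_cov k).2 y Gy.
have [m _ fm] := set_bij_surj f_bij (t := (k, i)) I.
by exists m => //; rewrite fm.
Qed.

Lemma Hbar_delta_eq0 (mu nu : set (BorelRn R n) -> \bar R) q t s (s' p K M : R)
    (E F : set V) :
  0 < K -> s' < p -> F `<=` E -> Hausdorff s' E = M%:E ->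
  (forall x, F x -> exists2 rho, 0 < rho & forall r, 0 < r -> r <= rho ->
      (mterm mu nu q t s (Some (x, r)) <= (K * r `^ p)%:E)%E) ->
  forall delta, 0 < delta -> Hbar_delta mu nu q t s F delta = 0%E.
Proof.
move=> K0 sp FE HsE bound delta delta0.
apply/eqP; rewrite eq_le; apply/andP; split; last first.
  apply: le_ereal_inf_tmp => _ [c _ <-].
  by apply: nneseries_ge0 => i _ _; exact: mterm_ge0.
apply/lee_addgt0Pr => eps eps0; rewrite add0e.
(* Stratify F by the radius up to which the local bound holds, cover each
   stratum with cost eps / 2^(k+1), and glue the coverings. *)
pose G k := [set x | F x /\ forall r, 0 < r -> r <= k.+1%:R^-1 ->
  (mterm mu nu q t s (Some (x, r)) <= (K * r `^ p)%:E)%E].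
have covering_G k : exists c, is_delta_covering (G k) delta c /\
    (\sum_(i <oo) mterm mu nu q t s (c i) <= (eps / (2 ^ k.+1)%:R)%:E)%E.
  have k_gt0 : 0 < k.+1%:R^-1 :> R by rewrite invr_gt0 ltr0n.
  have eps_k : 0 < eps / (2 ^ k.+1)%:R by rewrite divr_gt0 // ltr0n expn_gt0.
  have [c ? ?] := small_delta_covering K0 sp k_gt0 (fun x (Gx : G k x) => FE x Gx.1) HsE
    (fun x r (Gx : G k x) => Gx.2 r) delta0 eps_k.
  by exists c.
have [c c_spec] := choice covering_G.
have F_G : F `<=` \bigcup_k G k.
  move=> x Fx; have [rho rho0 x_bound] := bound x Fx.
  exists (Num.truncn rho^-1) => //; split => // r r0 r_small.
  apply: x_bound r0 (le_trans r_small _).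
  rewrite -[leRHS]invrK lef_pV2 ?posrE ?invr_gt0 ?ltr0n //.
  exact/ltW/truncnS_gt.
have G_F k : G k `<=` F by move=> x [].
apply: le_trans (Hbar_delta_le_bigcup mu nu q t s F_G G_F (fun k => (c_spec k).1)) _.
apply: le_trans (lee_nneseries _ (fun k _ => (c_spec k).2)) _.
  by move=> k _ _; apply: nneseries_ge0 => i _ _; exact: mterm_ge0.
exact: epsilon_trick0 (ltW eps0).
Qed.

Lemma Hmeas_eq0 (mu nu : set (BorelRn R n) -> \bar R) q t s (s' p K M : R) (E : set V) :
  0 < K -> s' < p -> Hausdorff s' E = M%:E ->
  (forall x, E x -> exists2 rho, 0 < rho & forall r, 0 < r -> r <= rho ->
      (mterm mu nu q t s (Some (x, r)) <= (K * r `^ p)%:E)%E) ->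
  Hmeas mu nu q t s E = 0%E.
Proof.
move=> K0 sp HsE bound; apply/eqP; rewrite eq_le; apply/andP; split.
  apply: ge_ereal_sup => _ [F FE <-]; apply: ge_ereal_sup => _ [d d0 <-].
  by rewrite (Hbar_delta_eq0 K0 sp FE HsE) // => x /FE; exact: bound.
rewrite -(Hbar_delta_eq0 K0 sp (@subset_refl _ E) HsE bound ltr01).
apply: (@le_trans _ _ (Hbar mu nu q t s E)).
  by apply: ereal_sup_ubound; exists 1 => //=; exact: ltr01.
by apply: ereal_sup_ubound; exists E.
Qed.

End MixedHausdorffComparison.

Theorem mainTheorem7 (R : realType) (n : nat)
  (mu nu : probability (BorelRn R n) R) (q t : R) :
  compact (supp mu) -> compact (supp nu) ->
  (\forall p \near (q, t), Bfun mu nu p.1 p.2 \is a fin_num) ->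
  differentiable (fun p : R * R => fine (Bfun mu nu p.1 p.2)) (q, t) ->
  let B := fun p : R * R => fine (Bfun mu nu p.1 p.2) in
  let alpha := - ('D_(1, 0) B (q, t)) in
  let beta := - ('D_(0, 1) B (q, t)) in
  forall eta1 eta2 : R, 0 < eta1 -> 0 < eta2 ->
  (Hausdorff (alpha * q + beta * t + B (q, t) - eta1 - eta2)
      (Elevel mu nu alpha beta)
   >= (2 `^ (alpha * q + beta * t - eta1 - eta2))%:E
      * Hmeas mu nu q t (B (q, t)) (Elevel mu nu alpha beta))%E.
Proof.
move=> _ _ _ _ B alpha beta eta1 eta2 eta1_gt0 eta2_gt0.
set s := B (q, t); set s' := alpha * q + beta * t + s - eta1 - eta2.
set E := Elevel mu nu alpha beta.
have := Hausdorff_ge0 s' E; case HsE : (Hausdorff s' E) => [M| |] // M_ge0; last exact: leey.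
set p := s' + (eta1 + eta2) / 2.
have s'p : s' < p by rewrite ltrDl divr_gt0 // addr_gt0.
have p_lt : p < alpha * q + beta * t + s.
  by rewrite /p /s'; clearbody alpha beta s; lra.
have two_s_gt0 : 0 < 2 `^ s by rewrite powR_gt0.
rewrite (Hmeas_eq0 two_s_gt0 s'p HsE) ?mule0 // => x Ex.
exact: Elevel_mterm_le Ex p_lt.
Qed.
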